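(* Let $(X,\mathcal{B},\mu)$ be a probability space and $T_1,\dots,T_k$ measurable transformations of $(X,\mathcal{B})$ with $T_i$-invariant probability measures $\mu_i$ equivalent to $\mu$. Let $\nu$ be a probability measure on $(X,\mathcal{B})$ equivalent to $\mu$. If $T_1,\dots,T_k$ are jointly mixing with respect to $(\mu;\mu_1,\dots,\mu_k)$, then they are jointly mixing with respect to $(\nu;\mu_1,\dots,\mu_k)$.
   Context: $T_1,\dots,T_k$ are jointly mixing with respect to $(\mu;\mu_1,\dots,\mu_k)$ if for all $A_0,\dots,A_k\in\mathcal{B}$, $\lim_{n\to\infty}\mu(A_0\cap T_1^{-n}A_1\cap\cdots\cap T_k^{-n}A_k)=\mu(A_0)\prod_{i=1}^k\mu_i(A_i)$. *)

From HB Require Import structures.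
From mathcomp Require Import all_boot all_order all_algebra.
From mathcomp Require Import all_classical all_reals all_analysis.
Set Implicit Arguments. Unset Strict Implicit. Unset Printing Implicit Defensive.
Import Order.TTheory GRing.Theory Num.Theory.
Local Open Scope classical_set_scope.
Local Open Scope ereal_scope.

Definition measure_equiv d (X : measurableType d) (R : realType)
  (mu nu : set X -> \bar R) : Prop :=
  forall A : set X, measurable A -> (mu A = 0 <-> nu A = 0).

Definition measure_invariant d (X : measurableType d) (R : realType)
  (mu : set X -> \bar R) (T : X -> X) : Prop :=
  forall A : set X, measurable A -> mu (T @^-1` A) = mu A.

Definition jointly_mixing d (X : measurableType d) (R : realType) (k : nat)
  (T : 'I_k -> X -> X) (mu : set X -> \bar R) (mus : 'I_k -> set X -> \bar R)
  : Prop :=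
  forall (A0 : set X) (A : 'I_k -> set X),
    measurable A0 -> (forall i, measurable (A i)) ->
    (fun n : nat => mu (A0 `&` \bigcap_(i in [set: 'I_k]) (iter n (T i) @^-1` A i)))
      @ \oo --> (mu A0 * \prod_(i < k) mus i (A i)).

From HB Require Import structures.
From mathcomp Require Import all_boot all_order all_algebra.
From mathcomp Require Import all_classical all_reals all_analysis.
From mathcomp Require Import finmap lra measurable_realfun.
Import Order.TTheory GRing.Theory Num.Theory HBNNSimple.
Local Open Scope classical_set_scope.
Local Open Scope ring_scope.
Local Open Scope ereal_scope.

(* By Radon-Nikodym, nu has a nonnegative mu-integrable density f.  Write
   B_n for the intersection of the T_i^{-n} A_i and c for the product of the
   mu_i (A_i).  Mixing for mu says mu (S `&` B_n) --> mu S * c for every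
   measurable S; by linearity the same holds for integrals over S `&` B_n of
   nonnegative simple functions h.  Choosing h <= f with \int (f - h) <= e
   pins the integral of f over every measurable set to within e of that of h,
   so nu (S `&` B_n) = \int_(S `&` B_n) f converges to (\int_S f) * c = nu S * c. *)

Lemma cvge_approx (R : realType) (a : nat -> \bar R) (l K : R) : (0 <= K)%R ->
  (forall e : R, (0 < e)%R -> exists (b : nat -> \bar R) (m : R),
    [/\ forall n, b n <= a n <= b n + e%:E, b n @[n --> \oo] --> m%:E
      & (`|m - l| <= K * e)%R]) ->
  a n @[n --> \oo] --> l%:E.
Proof.
move=> K0 approx.
have near_fin (b : nat -> \bar R) (m e : R) :
    (forall n, b n <= a n <= b n + e%:E) -> b n @[n --> \oo] --> m%:E ->
    \forall n \near \oo, a n \is a fin_num /\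
      (fine (b n) <= fine (a n) <= fine (b n) + e)%R.
  move=> bab /fine_cvgP[bfin _]; apply: filterS bfin => n bnfin.
  have /andP[] := bab n; rewrite -(fineK bnfin) -EFinD.
  by case: (a n) => [r| |] //=; rewrite ?lee_fin ?leey ?leNye // => -> ->.
apply/fine_cvgP; split.
  have [b [m [bab bm _]]] := approx 1%R ltr01.
  by apply: filterS (near_fin b m 1%R bab bm) => n [].
apply/cvgrPdist_le => eps eps0.
have [e e0 epsE] : exists2 e : R, (0 < e)%R & (eps = K * e + 2 * e)%R.
  have K2 : (0 < K + 2)%R by lra.
  exists (eps / (K + 2))%R; first exact: divr_gt0.
  by rewrite -mulrDl mulrC -mulrA mulVf ?mulr1 // gt_eqF.
have [b [m [bab bm ml]]] := approx e e0.
move/fine_cvgP: (bm) => [_ /cvgrPdist_le /(_ _ e0) bnear].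
apply: filterS2 (near_fin _ _ _ bab bm) bnear => n [_ /andP[ba ab]] mb.
move: ml mb; rewrite !ler_norml epsE /=; generalize (K * e)%R => Ke; lra.
Qed.

Section mixing_densities.
Context d (X : measurableType d) (R : realType) (mu : {measure set X -> \bar R}).

Lemma setintegral_nnsfunE (h : {nnsfun X >-> R}) (D : set X) : measurable D ->
  \int[mu]_(x in D) (h x)%:E =
  \sum_(y <- fset_set (range h)) y%:E * mu (h @^-1` [set y] `&` D).
Proof.
move=> mD.
transitivity (\int[mu]_(x in D) \sum_(y <- fset_set (range h))
    (y * \1_(h @^-1` [set y]) x)%:E).
  by apply: eq_integral => x _; rewrite fimfunE fsbig_finite //= sumEFin.
rewrite ge0_integral_sum //.
- apply: eq_bigr => y _; rewrite (integralZl_indic_nnsfun _ mD).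
  by rewrite (integral_indic mu mD) //; exact: measurable_funPTI.
- by move=> y; apply/measurable_EFinP; exact: measurable_funM.
- move=> y x _; rewrite lee_fin indicE; case: (boolP (x \in _)) => [|_].
    by rewrite mulr1 => /set_mem /= <-.
  by rewrite mulr0.
Qed.

Lemma nnsfun_level_measure_ge0 (h : {nnsfun X >-> R}) (D : set X) (y : R) :
  0 <= y%:E * mu (h @^-1` [set y] `&` D).
Proof.
have [y0|y0] := ltP y 0%R; last by rewrite mule_ge0.
by rewrite preimage_nnfun0 // set0I measure0 mule0.
Qed.

Section nnsfun_approximation.
Context {f : X -> \bar R} {e : R}.
Hypotheses (intf : mu.-integrable setT f) (f0 : forall x, 0 <= f x) (e0 : (0 < e)%R).

Let mf : measurable_fun setT f. Proof. by case/integrableP: intf. Qed.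

Lemma integral_nnsfun_approx : exists h : {nnsfun X >-> R},
  (forall x, (h x)%:E <= f x) /\ \int[mu]_x f x <= \int[mu]_x (h x)%:E + e%:E.
Proof.
pose g := nnsfun_approx measurableT mf.
have gf n x : (g n x)%:E <= f x by rewrite /g nnsfun_approxE; exact: le_approx.
have cvg_g : \int[mu]_x (g n x)%:E @[n --> \oo] --> \int[mu]_x f x.
  have -> : \int[mu]_x f x = \int[mu]_x limn (fun n => (g n x)%:E).
    apply: eq_integral => x _; apply/esym/cvg_lim => //.
    exact: (cvg_nnsfun_approx measurableT mf (fun x _ => f0 x)).
  apply: cvg_monotone_convergence => //.
  - by move=> n; apply/measurable_EFinP; exact: measurable_funP.
  - by move=> n x _; rewrite lee_fin.
  - move=> x _ m n mn; rewrite lee_fin.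
    by have /lefP := nd_nnsfun_approx measurableT mf mn; apply.
have ffin := integrable_fin_num measurableT intf.
move: cvg_g; rewrite -(fineK ffin) => /fine_cvgP[gfin /cvgrPdist_le /(_ _ e0) ge].
have [N _ /(_ N (leqnn N))[gNfin gNe]] : \forall n \near \oo,
    \int[mu]_x (g n x)%:E \is a fin_num /\
    (`|fine (\int[mu]_x f x) - fine (\int[mu]_x (g n x)%:E)| <= e)%R.
  by near=> n; split; near: n.
exists (g N); split => //.
rewrite -(fineK ffin) -(fineK gNfin) -EFinD lee_fin.
by move: gNe; rewrite ler_norml => /andP[_]; lra.
Unshelve. all: by end_near. Qed.

Lemma setintegral_nnsfun_approx : exists h : {nnsfun X >-> R},
  forall S, measurable S -> \int[mu]_(x in S) (h x)%:E <= \int[mu]_(x in S) f x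
    <= \int[mu]_(x in S) (h x)%:E + e%:E.
Proof.
have [h [hf fh]] := integral_nnsfun_approx; exists h => S mS.
have mfh D : measurable D -> measurable_fun D (fun x => f x - (h x)%:E).
  move=> mD; apply: emeasurable_funB; first exact: measurable_funS mf.
  by apply/measurable_EFinP; exact: measurable_funP.
have fh0 x : 0 <= f x - (h x)%:E by rewrite sube_ge0.
have splitf D : measurable D -> \int[mu]_(x in D) f x =
    \int[mu]_(x in D) (h x)%:E + \int[mu]_(x in D) (f x - (h x)%:E).
  move=> mD; rewrite -ge0_integralD //.
  - by apply: eq_integral => x _; rewrite addeC subeK.
  - by move=> x _; rewrite lee_fin.
  - by apply/measurable_EFinP; exact: measurable_funP.
  - exact: mfh.
have hfin : \int[mu]_x (h x)%:E \is a fin_num.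
  rewrite ge0_fin_numE; last by apply: integral_ge0 => x _; rewrite lee_fin.
  apply: le_lt_trans (integrable_lty measurableT intf); apply: ge0_le_integral => //.
  - by move=> x _; rewrite lee_fin.
  - by apply/measurable_EFinP; exact: measurable_funP.
have gap : \int[mu]_x (f x - (h x)%:E) <= e%:E.
  by move: fh; rewrite (splitf _ measurableT) leeD2lE.
rewrite (splitf _ mS) leeDl ?integral_ge0 //=; apply: leeD2l.
apply: le_trans gap; apply: ge0_subset_integral => //; exact: mfh.
Qed.

End nnsfun_approximation.

Variables (B : nat -> set X) (c : \bar R).
Hypotheses (mB : forall n, measurable (B n)) (c0 : 0 <= c) (cfin : c \is a fin_num).
Hypothesis mixing :
  forall S, measurable S -> mu (S `&` B n) @[n --> \oo] --> mu S * c.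

Lemma mixing_setintegral_nnsfun (h : {nnsfun X >-> R}) (S : set X) :
  measurable S ->
  \int[mu]_(x in S `&` B n) (h x)%:E @[n --> \oo] --> (\int[mu]_(x in S) (h x)%:E) * c.
Proof.
move=> mS.
under eq_fun => n do rewrite (setintegral_nnsfunE h _ (measurableI _ _ mS (mB n))).
rewrite setintegral_nnsfunE // ge0_sume_distrl; last first.
  by move=> y _; exact: nnsfun_level_measure_ge0.
apply: cvg_nnesum => y _.
  by near=> n; exact: nnsfun_level_measure_ge0.
under eq_fun do rewrite setIA; rewrite -muleA; apply: cvgeZl => //.
by apply: mixing; apply: measurableI => //; exact: measurable_funPTI.
Unshelve. all: by end_near. Qed.

Lemma mixing_setintegral (f : X -> \bar R) (S : set X) :
  mu.-integrable setT f -> (forall x, 0 <= f x) -> measurable S ->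
  \int[mu]_(x in S `&` B n) f x @[n --> \oo] --> (\int[mu]_(x in S) f x) * c.
Proof.
move=> intf f0 mS.
have ffin : \int[mu]_(x in S) f x \is a fin_num.
  by apply: integrable_fin_num => //; exact: integrableS intf.
rewrite -(fineK ffin) -(fineK cfin) -EFinM.
apply: cvge_approx (fine_ge0 c0) _ => e e0.
have [h happrox] := setintegral_nnsfun_approx intf f0 e0.
have /andP[hf fh] := happrox S mS.
have hfin : \int[mu]_(x in S) (h x)%:E \is a fin_num.
  rewrite ge0_fin_numE; last by apply: integral_ge0 => x _; rewrite lee_fin.
  by apply: le_lt_trans hf _; rewrite ltey_eq ffin.
exists (fun n => \int[mu]_(x in S `&` B n) (h x)%:E).
exists (fine (\int[mu]_(x in S) (h x)%:E) * fine c)%R; split.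
- by move=> n; apply: happrox; exact: measurableI.
- by rewrite EFinM !fineK //; exact: mixing_setintegral_nnsfun.
- rewrite -mulrBl normrM (ger0_norm (fine_ge0 c0)) mulrC ler_wpM2l ?fine_ge0 //.
  move: hf fh; rewrite -(fineK hfin) -(fineK ffin) -EFinD !lee_fin ler_norml.
  lra.
Qed.

End mixing_densities.

Lemma measurable_fun_iter d (X : measurableType d) (T : X -> X) (n : nat) :
  measurable_fun setT T -> measurable_fun setT (iter n T).
Proof.
move=> mT; elim: n => [|n IH]; first exact: measurable_id.
exact: measurableT_comp mT IH.
Qed.

Theorem lemma6p2 (d : measure_display) (X : measurableType d) (R : realType)
  (k : nat) (mu : probability X R) (T : 'I_k -> X -> X)
  (mus : 'I_k -> probability X R) (nu : probability X R) :
  (forall i, measurable_fun setT (T i)) ->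
  (forall i, measure_invariant (mus i) (T i)) ->
  (forall i, measure_equiv (mus i) mu) ->
  measure_equiv nu mu ->
  jointly_mixing T mu (fun i => mus i) ->
  jointly_mixing T nu (fun i => mus i).
Proof.
move=> mT _ _ nu_mu mix A0 A mA0 mA.
set B := fun n => \bigcap_(i in [set: 'I_k]) (iter n (T i) @^-1` A i).
have mB n : measurable (B n).
  apply: fin_bigcap_measurable => // i _; rewrite -[X in measurable X]setTI.
  exact: measurable_fun_iter.
have nu_ll_mu : nu `<< mu.
  by apply/null_content_dominatesP => S mS /(nu_mu S mS).2.
have [f [f0 _ intf nuE]] := radon_nikodym_sigma_finite nu_ll_mu.
have c0 : 0 <= \prod_(i < k) mus i (A i) by apply: prode_ge0.
have cfin : \prod_(i < k) mus i (A i) \is a fin_num.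
  by apply: prode_fin_num => i _; exact: fin_num_measure.
rewrite (nuE _ mA0).
under eq_fun => n do rewrite (nuE _ (measurableI _ _ mA0 (mB n))).
by apply: mixing_setintegral => // S mS; exact: mix.
Qed.
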